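(* Let $A$ be a commutative $K$-algebra, $\mathcal{D}=\mathcal{D}(A)$, and $\mathcal{D}_{[0]}=\{\delta\in\mathcal{D}\mid\delta*1=0\}$. Then: (1) The set of left $\mathcal{D}$-submodules of the $\mathcal{D}$-module $A$ equals the set of $\mathcal{D}$-stable ideals of $A$ (ideals $\mathfrak{a}$ with $\mathcal{D}*\mathfrak{a}\subseteq\mathfrak{a}$). (2) The $\mathcal{D}$-module $A$ is simple if and only if $A$ has no nonzero proper $\mathcal{D}$-stable ideal. (3) The map $\mathfrak{a}\mapsto\mathfrak{a}+\mathcal{D}_{[0]}$, from the set of $\mathcal{D}$-stable ideals of $A$ containing $\mathcal{D}_{[0]}*A$ to the set of ideals of $\mathcal{D}$ containing $\mathcal{D}_{[0]}$, is a bijection with inverse $I\mapsto I\cap A$. The ideal $\mathcal{D}\mathcal{D}_{[0]}\mathcal{D}=\mathcal{D}_{[0]}*A+\mathcal{D}_{[0]}$ is the least ideal of $\mathcal{D}$ containing $\mathcal{D}_{[0]}$, and $\mathcal{D}_{[0]}*A=A\cap\mathcal{D}\mathcal{D}_{[0]}\mathcal{D}$ is a $\mathcal{D}$-stable ideal of $A$.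
   Context: $\mathcal{D}(A)=\bigcup_{i\ge0}\mathcal{D}(A)_i\subseteq\mathrm{End}_K(A)$ with $\mathcal{D}(A)_{-1}=0$, $\mathcal{D}(A)_i=\{u\mid au-ua\in\mathcal{D}(A)_{i-1}\ \forall a\in A\}$; $A\subseteq\mathcal{D}(A)$ via multiplication operators. $A$ is a left $\mathcal{D}(A)$-module via $\delta*a=\delta(a)$, and $\mathcal{D}_{[0]}*A$ denotes the $K$-span of $\{\delta*a\mid\delta\in\mathcal{D}_{[0]},a\in A\}$. *)

From mathcomp Require Import all_boot all_order all_algebra.
Set Implicit Arguments. Unset Strict Implicit. Unset Printing Implicit Defensive.
Import GRing.Theory.
Local Open Scope ring_scope.

(* Operators on A are Rocq functions A -> A; End_K(A) = the K-linear ones.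
   Subsets are predicates (Prop-valued). Composition (\o) is the product in D. *)
Section DiffOps.
Variables (K : fieldType) (A : comAlgType K).

Definition Klinear (u : A -> A) : Prop :=
  forall (k : K) (x y : A), u (k *: x + y) = k *: u x + u y.

Definition mulop (a : A) : A -> A := fun x => a * x.

Definition commop (a : A) (u : A -> A) : A -> A := fun x => a * u x - u (a * x).

(* D(A)_i, with D(A)_{-1} = 0, so D(A)_0 = {u | a u - u a = 0 for all a} *)
Fixpoint diffop (i : nat) (u : A -> A) : Prop :=
  Klinear u /\
  match i with
  | 0%N => forall a x, commop a u x = 0
  | i'.+1 => forall a, diffop i' (commop a u)
  end.

Definition isD (u : A -> A) : Prop := exists i, diffop i u.

Definition D0 (d : A -> A) : Prop := isD d /\ d 1 = 0.

Definition isDIdeal (I : (A -> A) -> Prop) : Prop :=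
  [/\ forall u, I u -> isD u,
      I (fun _ => 0),
      forall u v, I u -> I v -> I (fun x => u x - v x)
    & forall u v, isD u -> I v -> I (u \o v) /\ I (v \o u)].

Definition isAIdeal (a : A -> Prop) : Prop :=
  [/\ a 0, forall x y, a x -> a y -> a (x - y) & forall r x, a x -> a (r * x)].

Definition isDsubmodule (M : A -> Prop) : Prop :=
  [/\ M 0, forall x y, M x -> M y -> M (x - y)
    & forall d x, isD d -> M x -> M (d x)].

Definition isDstableIdeal (a : A -> Prop) : Prop :=
  isAIdeal a /\ forall d x, isD d -> a x -> a (d x).

Definition Dsimple : Prop :=
  (exists x : A, x != 0) /\
  forall M, isDsubmodule M -> (forall x, M x -> x = 0) \/ (forall x, M x).

Definition D0A (x : A) : Prop :=
  exists n (k : 'I_n -> K) (d : 'I_n -> A -> A) (b : 'I_n -> A),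
    (forall i, D0 (d i)) /\ x = \sum_(i < n) k i *: d i (b i).

Definition DD0D (f : A -> A) : Prop :=
  exists n (u d v : 'I_n -> A -> A),
    (forall i, [/\ isD (u i), D0 (d i) & isD (v i)]) /\
    f = (fun x => \sum_(i < n) u i (d i (v i x))).

(* a |-> a + D_[0]  (a viewed inside D via multiplication operators) *)
Definition plusD0 (a : A -> Prop) : (A -> A) -> Prop :=
  fun f => exists b d, a b /\ D0 d /\ f = (fun x => b * x + d x).

Definition capA (I : (A -> A) -> Prop) : A -> Prop := fun b => I (mulop b).

End DiffOps.

From mathcomp Require Import all_boot all_order all_algebra.
From Stdlib Require Import FunctionalExtensionality Classical.
Set Implicit Arguments. Unset Strict Implicit. Unset Printing Implicit Defensive.
Import GRing.Theory.
Local Open Scope ring_scope.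

(* Every delta in D splits as delta = delta(1) + (delta - delta(1)), the second
   summand lying in D_[0]; so D = A + D_[0] and delta is determined modulo D_[0]
   by delta(1).  Hence an ideal I of D containing D_[0] consists of the delta in D
   with delta(1) in I \cap A, and a + D_[0] of the delta in D with delta(1) in a,
   which gives (3).  The Leibniz rule [a, uv] = [a, u] v + u [a, v] shows that D
   is closed under composition, and (1), (2) hold because the multiplication
   operators lie in D. *)

Section DifferentialOperators.
Variables (K : fieldType) (A : comAlgType K).
Implicit Types (u v f g d : A -> A) (a b x y : A).

Lemma eqfun_pred (T : Type) (P : (A -> T) -> Prop) (f g : A -> T) :
  f =1 g -> P f -> P g.
Proof. by move/functional_extensionality ->. Qed.

Lemma pointwise_sum_ind (P : (A -> A) -> Prop) :
  P (fun _ => 0) -> (forall f g, P f -> P g -> P (fun x => f x + g x)) ->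
  forall n (F : 'I_n -> A -> A), (forall i, P (F i)) ->
  P (fun x => \sum_(i < n) F i x).
Proof.
move=> P0 PD; elim=> [|n IHn] F PF.
  by apply: eqfun_pred P0 => x; rewrite big_ord0.
have := PD _ _ (IHn _ (fun i => PF (widen_ord (leqnSn n) i))) (PF ord_max).
by apply: eqfun_pred => x; rewrite big_ord_recr.
Qed.

Section KlinearTheory.
Variable u : A -> A.
Hypothesis lin_u : Klinear u.

Lemma KlinearD x y : u (x + y) = u x + u y.
Proof. by have := lin_u 1 x y; rewrite !scale1r. Qed.

Lemma Klinear0 : u 0 = 0.
Proof. by apply: (addrI (u 0)); rewrite -KlinearD !addr0. Qed.

Lemma KlinearZ k x : u (k *: x) = k *: u x.
Proof. by have := lin_u k x 0; rewrite !addr0 Klinear0 addr0. Qed.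

Lemma KlinearN x : u (- x) = - u x.
Proof. by rewrite -scaleN1r KlinearZ scaleN1r. Qed.

Lemma KlinearB x y : u (x - y) = u x - u y.
Proof. by rewrite KlinearD KlinearN. Qed.

Lemma Klinear_sum n (F : 'I_n -> A) : u (\sum_(i < n) F i) = \sum_(i < n) u (F i).
Proof. exact: (big_morph u KlinearD Klinear0). Qed.

End KlinearTheory.

Lemma Klinear_comb c u v : Klinear u -> Klinear v ->
  Klinear (fun x => c *: u x + v x).
Proof.
move=> lin_u lin_v k x y; rewrite lin_u lin_v !scalerDr !scalerA [c * k]mulrC.
by rewrite addrACA.
Qed.

Lemma Klinear_comp u v : Klinear u -> Klinear v -> Klinear (u \o v).
Proof. by move=> lin_u lin_v k x y /=; rewrite lin_v lin_u. Qed.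

Lemma commop_comb a c u v x :
  commop a (fun y => c *: u y + v y) x = c *: commop a u x + commop a v x.
Proof. by rewrite /commop mulrDr -scalerAr scalerBr opprD addrACA. Qed.

Lemma commop_comp a u v x : Klinear u ->
  commop a (u \o v) x = commop a u (v x) + u (commop a v x).
Proof. by move=> lin_u; rewrite /commop /= KlinearB // addrA subrK. Qed.

Lemma diffop_Klinear i u : diffop i u -> Klinear u.
Proof. by case: i => [[]|i []]. Qed.

Lemma diffop_eq0 i u : u =1 (fun _ => 0) -> diffop i u.
Proof.
move/functional_extensionality ->.
have lin0 : Klinear (fun _ : A => 0 : A) by move=> k x y; rewrite scaler0 addr0.
elim: i => [|i IHi]; split=> // a; last apply: eqfun_pred IHi.
all: by move=> x; rewrite /commop mulr0 subrr.
Qed.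

Lemma diffopS i u : diffop i u -> diffop i.+1 u.
Proof.
elim: i u => [|i IHi] u [lin_u Du]; split=> // a; last exact: IHi (Du a).
exact: diffop_eq0.
Qed.

Lemma diffop_leq i j u : (i <= j)%N -> diffop i u -> diffop j u.
Proof. by move/subnK <-; elim: (j - i)%N => // k IHk /IHk /diffopS. Qed.

Lemma diffop_comb i c u v : diffop i u -> diffop i v ->
  diffop i (fun x => c *: u x + v x).
Proof.
elim: i u v => [|i IHi] u v [lin_u Du] [lin_v Dv].
  split=> [|a x]; first exact: Klinear_comb.
  by rewrite commop_comb Du Dv scaler0 addr0.
split=> [|a]; first exact: Klinear_comb.
by apply: eqfun_pred (IHi _ _ (Du a) (Dv a)) => x; rewrite commop_comb.
Qed.

Lemma diffopD i u v : diffop i u -> diffop i v -> diffop i (fun x => u x + v x).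
Proof.
move=> Du Dv; apply: eqfun_pred (diffop_comb 1 Du Dv) => x.
by rewrite scale1r.
Qed.

(* Induction on the Leibniz rule [commop_comp]; a commutator [commop a u] with u
   of order 0 vanishes, which covers the terms of order -1. *)
Lemma diffop_comp m i j u v : (i + j <= m)%N -> diffop i u -> diffop j v ->
  diffop m (u \o v).
Proof.
elim: m i j u v => [|m IHm] i j u v.
  rewrite leqn0 addn_eq0 => /andP[/eqP-> /eqP->] [lin_u Du] [lin_v Dv].
  split=> [|a x]; first exact: Klinear_comp.
  by rewrite commop_comp // Du Dv Klinear0 // addr0.
move=> ijm Du Dv; have lin_u := diffop_Klinear Du.
split=> [|a]; first exact: Klinear_comp (diffop_Klinear Dv).
apply: eqfun_pred (fun x => esym (commop_comp a v x lin_u)) _.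
apply: diffopD.
- case: i ijm Du {lin_u} => [|i] ijm [_ Du].
    by apply: diffop_eq0 => x; rewrite Du.
  exact: IHm (Du a) Dv.
- case: j ijm Dv => [|j] ijm [lin_v Dv].
    by apply: diffop_eq0 => x; rewrite Dv Klinear0.
  by apply: IHm Du (Dv a); rewrite addnS ltnS in ijm.
Qed.

Lemma isD_Klinear u : isD u -> Klinear u.
Proof. by case=> i /diffop_Klinear. Qed.

Lemma isD_comb c u v : isD u -> isD v -> isD (fun x => c *: u x + v x).
Proof.
case=> i Du [j Dv]; exists (maxn i j).
by apply: diffop_comb; [apply: diffop_leq (leq_maxl i j) Du
                      | apply: diffop_leq (leq_maxr i j) Dv].
Qed.

Lemma isD_comp u v : isD u -> isD v -> isD (u \o v).
Proof. by case=> i Du [j Dv]; exists (i + j)%N; apply: diffop_comp Du Dv. Qed.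

Lemma isD_mulop b : isD (mulop b).
Proof.
exists 0%N; split=> [k x y|a x]; first by rewrite /mulop mulrDr scalerAr.
by rewrite /commop /mulop mulrCA subrr.
Qed.

Lemma isD_id : isD (@id A).
Proof. by apply: eqfun_pred (isD_mulop 1) => x; rewrite /mulop mul1r. Qed.

Lemma isD0 : isD (fun _ : A => 0 : A).
Proof. by apply: eqfun_pred (isD_mulop 0) => x; rewrite /mulop mul0r. Qed.

Lemma isDD u v : isD u -> isD v -> isD (fun x => u x + v x).
Proof.
by move=> Du Dv; apply: eqfun_pred (isD_comb 1 Du Dv) => x; rewrite scale1r.
Qed.

Lemma isDB u v : isD u -> isD v -> isD (fun x => u x - v x).
Proof.
move=> Du Dv; apply: eqfun_pred (isD_comb (-1) Dv Du) => x.
by rewrite scaleN1r addrC.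
Qed.

Definition D0proj f : A -> A := fun x => f x - f 1 * x.

Lemma D0proj_D0 f : isD f -> D0 (D0proj f).
Proof.
move=> Df; split; first exact: isDB Df (isD_mulop (f 1)).
by rewrite /D0proj mulr1 subrr.
Qed.

Lemma D0proj_split f x : f x = f 1 * x + D0proj f x.
Proof. by rewrite /D0proj addrC subrK. Qed.

Lemma D0_comp u d : isD u -> D0 d -> D0 (u \o d).
Proof.
move=> Du [Dd d1]; split; first exact: isD_comp.
by rewrite /= d1 Klinear0 //; apply: isD_Klinear.
Qed.

Lemma plusD0P (P : A -> Prop) f : plusD0 P f <-> isD f /\ P (f 1).
Proof.
split=> [[b [d [Pb [[Dd d1] ->]]]]|[Df Pf1]].
  by split; [apply: isDD (isD_mulop b) Dd | rewrite mulr1 d1 addr0].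
exists (f 1), (D0proj f); split=> //; split; first exact: D0proj_D0.
exact/functional_extensionality/D0proj_split.
Qed.

Lemma isAIdealD (a : A -> Prop) : isAIdeal a -> forall x y, a x -> a y -> a (x + y).
Proof.
case=> a0 aB _ x y ax ay; have := aB x (0 - y) ax (aB 0 y a0 ay).
by rewrite sub0r opprK.
Qed.

Lemma isDsubmoduleP (M : A -> Prop) : isDsubmodule M <-> isDstableIdeal M.
Proof.
split=> [[M0 MB MD]|[[M0 MB _] MD]]; last by split.
by split=> //; split=> // r x; apply: MD (isD_mulop r).
Qed.

Lemma DsimpleP : Dsimple A <->
  ~ (exists a : A -> Prop, isDstableIdeal a /\
       (exists x, a x /\ x != 0) /\ (exists y, ~ a y)).
Proof.
split=> [[_ simpleA] [a [/isDsubmoduleP sub_a [[x [ax x_neq0]] [y not_ay]]]]|].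
  case: (simpleA a sub_a) => [a_eq0|a_full]; last exact: not_ay.
  by move: x_neq0; rewrite (a_eq0 x ax) eqxx.
move=> no_ideal; split=> [|M /isDsubmoduleP stable_M]; first by exists 1; apply: oner_neq0.
have [[x [Mx x_neq0]]|M_eq0] := classic (exists x, M x /\ x != 0).
  right=> y; apply: NNPP => not_My; apply: no_ideal.
  by exists M; split=> //; split; [exists x | exists y].
left=> x Mx; have [//|x_neq0] := eqVneq x 0.
by case: M_eq0; exists x.
Qed.

Definition ord_glue (T : Type) m n (f : 'I_m -> T) (g : 'I_n -> T)
  (i : 'I_(m + n)) : T :=
  match split i with inl j => f j | inr j => g j end.

Lemma ord_glue_lshift (T : Type) m n (f : 'I_m -> T) (g : 'I_n -> T) i :
  ord_glue f g (lshift n i) = f i.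
Proof. by rewrite /ord_glue (unsplitK (inl i)). Qed.

Lemma ord_glue_rshift (T : Type) m n (f : 'I_m -> T) (g : 'I_n -> T) i :
  ord_glue f g (rshift m i) = g i.
Proof. by rewrite /ord_glue (unsplitK (inr i)). Qed.

Lemma D0A0 : D0A (0 : A).
Proof.
exists 0%N, (fun _ => 0), (fun _ _ => 0), (fun _ => 0).
by split=> [[] //|]; rewrite big_ord0.
Qed.

Lemma D0AD x y : D0A x -> D0A y -> D0A (x + y).
Proof.
case=> m [k [d [b [D0d ->]]]] [n [k' [d' [b' [D0d' ->]]]]].
exists (m + n)%N, (ord_glue k k'), (ord_glue d d'), (ord_glue b b').
split=> [i|]; first by rewrite /ord_glue; case: (split i).
by rewrite big_split_ord; congr (_ + _); apply: eq_bigr => i _;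
  rewrite ?ord_glue_lshift ?ord_glue_rshift.
Qed.

Lemma D0A_isD u x : isD u -> D0A x -> D0A (u x).
Proof.
move=> Du [n [k [d [b [D0d ->]]]]]; have lin_u := isD_Klinear Du.
exists n, k, (fun i => u \o d i), b; split=> [i|]; first exact: D0_comp.
by rewrite Klinear_sum //; apply: eq_bigr => i _; rewrite KlinearZ.
Qed.

Lemma D0A_D0 d b : D0 d -> D0A (d b).
Proof.
move=> D0d; exists 1%N, (fun _ => 1), (fun _ => d), (fun _ => b).
by rewrite big_ord1 scale1r.
Qed.

Lemma D0A_stable : isDstableIdeal (@D0A K A).
Proof.
split=> [|d x Dd]; last exact: D0A_isD.
split=> [|x y Dx Dy|r x]; [exact: D0A0 | | exact: D0A_isD (isD_mulop r)].
by apply: D0AD Dx _; rewrite -mulN1r; apply: D0A_isD (isD_mulop _) Dy.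
Qed.

Lemma D0A_min (a : A -> Prop) : isAIdeal a -> (forall d b, D0 d -> a (d b)) ->
  forall x, D0A x -> a x.
Proof.
move=> ideal_a a_D0 x [n [k [d [b [D0d ->]]]]]; have [a0 _ a_mul] := ideal_a.
apply: (big_ind a a0 (isAIdealD ideal_a)) => i _.
by rewrite -mulr_algl; apply/a_mul/a_D0.
Qed.

Section IdealsContainingD0.
Variable I : (A -> A) -> Prop.
Hypotheses (ideal_I : isDIdeal I) (I_D0 : forall d, D0 d -> I d).

Lemma isDIdealD u v : I u -> I v -> I (fun x => u x + v x).
Proof.
have [_ I0 IB _] := ideal_I; move=> Iu Iv.
by apply: eqfun_pred (IB _ _ Iu (IB _ _ I0 Iv)) => x; rewrite sub0r opprK.
Qed.

Lemma isDIdeal_mulop f : I f -> I (mulop (f 1)).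
Proof.
have [ID _ IB _] := ideal_I; move=> If.
have := IB _ _ If (I_D0 (D0proj_D0 (ID _ If))).
by apply: eqfun_pred => x; rewrite /mulop (D0proj_split f x) addrK.
Qed.

Lemma isDIdealP f : I f <-> isD f /\ capA I (f 1).
Proof.
have [ID _ _ _] := ideal_I.
split=> [If|[Df If1]]; first by split; [apply: ID | apply: isDIdeal_mulop].
have := isDIdealD If1 (I_D0 (D0proj_D0 Df)).
by apply: eqfun_pred => x; rewrite /mulop -D0proj_split.
Qed.

Lemma capA_stable : isDstableIdeal (capA I).
Proof.
have [_ I0 IB Icomp] := ideal_I; split; first split.
- by apply: eqfun_pred I0 => x; rewrite /mulop mul0r.
- by move=> x y Ix Iy; apply: eqfun_pred (IB _ _ Ix Iy) => z; rewrite /mulop mulrBl.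
- move=> r x Ix; apply: eqfun_pred (Icomp _ _ (isD_mulop r) Ix).1 => z.
  by rewrite /mulop /= mulrA.
- move=> d x Dd Ix; apply: eqfun_pred (isDIdeal_mulop (Icomp _ _ Dd Ix).1) => z.
  by rewrite /mulop /= mulr1.
Qed.

Lemma D0A_capA x : D0A x -> capA I x.
Proof.
have [_ _ _ Icomp] := ideal_I; apply: D0A_min => [|d b D0d].
  by case: capA_stable.
have := isDIdeal_mulop (Icomp _ _ (isD_mulop b) (I_D0 D0d)).2.
by apply: eqfun_pred => y; rewrite /mulop /= mulr1.
Qed.

Lemma DD0D_min f : DD0D f -> I f.
Proof.
have [_ I0 _ Icomp] := ideal_I; case=> n [u [d [v [Duv ->]]]].
apply: (pointwise_sum_ind I0 isDIdealD (F := fun i => u i \o (d i \o v i))) => i.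
have [Du D0d Dv] := Duv i.
exact: (Icomp _ _ Du (Icomp _ _ Dv (I_D0 D0d)).2).1.
Qed.

End IdealsContainingD0.

Section StableIdealsContainingD0A.
Variable a : A -> Prop.
Hypotheses (stable_a : isDstableIdeal a) (a_D0A : forall x, D0A x -> a x).

Lemma plusD0_DIdeal : isDIdeal (plusD0 a).
Proof.
have [[a0 aB a_mul] a_isD] := stable_a.
split=> [u /plusD0P[] //|||u v Du /plusD0P[Dv av]].
- by apply/plusD0P; split; [apply: isD0 | apply: a0].
- move=> u v /plusD0P[Du au] /plusD0P[Dv av]; apply/plusD0P.
  by split; [apply: isDB | apply: aB].
split; apply/plusD0P; split; [exact: isD_comp | exact: a_isD Du av | exact: isD_comp |].
(* (v u)(1) = u(1) v(1) + (v - v(1))(u(1)), the last term lying in D_[0]*A. *)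
rewrite /= (D0proj_split v (u 1)); apply: isAIdealD; first by case: stable_a.
  by rewrite mulrC; apply: a_mul.
by apply/a_D0A/D0A_D0/D0proj_D0.
Qed.

Lemma D0_plusD0 d : D0 d -> plusD0 a d.
Proof. by case=> Dd d1; apply/plusD0P; rewrite d1; case: stable_a => -[]. Qed.

Lemma capA_plusD0 x : capA (plusD0 a) x <-> a x.
Proof.
rewrite /capA plusD0P /mulop mulr1.
by split=> [[]|ax] //; split=> //; apply: isD_mulop.
Qed.

End StableIdealsContainingD0A.

Lemma DD0D_single u d v : isD u -> D0 d -> isD v -> DD0D (fun x => u (d (v x))).
Proof.
move=> Du D0d Dv; exists 1%N, (fun _ => u), (fun _ => d), (fun _ => v).
by split=> //; apply: functional_extensionality => x; rewrite big_ord1.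
Qed.

Lemma D0_DD0D d : D0 d -> DD0D d.
Proof. by move=> D0d; apply: eqfun_pred (DD0D_single isD_id D0d isD_id) => x. Qed.

Lemma DD0D0 : DD0D (fun _ : A => 0 : A).
Proof.
exists 0%N, (fun _ => id), (fun _ => id), (fun _ => id).
split=> [[] //|]; by apply: functional_extensionality => x; rewrite big_ord0.
Qed.

Lemma DD0DD f g : DD0D f -> DD0D g -> DD0D (fun x => f x + g x).
Proof.
case=> m [u [d [v [Duv ->]]]] [n [u' [d' [v' [Duv' ->]]]]].
exists (m + n)%N, (ord_glue u u'), (ord_glue d d'), (ord_glue v v').
split=> [i|]; first by rewrite /ord_glue; case: (split i).
apply: functional_extensionality => x.
by rewrite big_split_ord; congr (_ + _); apply: eq_bigr => i _;
  rewrite ?ord_glue_lshift ?ord_glue_rshift.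
Qed.

Lemma DD0D_compl u f : isD u -> DD0D f -> DD0D (u \o f).
Proof.
move=> Du [n [w [d [v [Dwdv ->]]]]].
exists n, (fun i => u \o w i), d, v; split=> [i|].
  by have [Dw D0d Dv] := Dwdv i; split=> //; apply: isD_comp.
apply: functional_extensionality => x /=.
by rewrite Klinear_sum //; apply: isD_Klinear.
Qed.

Lemma DD0D_compr u f : isD u -> DD0D f -> DD0D (f \o u).
Proof.
move=> Du [n [w [d [v [Dwdv ->]]]]]; exists n, w, d, (fun i => v i \o u).
by split=> // i; have [Dw D0d Dv] := Dwdv i; split=> //; apply: isD_comp.
Qed.

Lemma DD0D_isD f : DD0D f -> isD f.
Proof.
case=> n [u [d [v [Duv ->]]]].
apply: (pointwise_sum_ind isD0 isDD (F := fun i => u i \o (d i \o v i))) => i.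
by have [Du [Dd _] Dv] := Duv i; apply/isD_comp/isD_comp.
Qed.

Lemma DD0D_D0A f : DD0D f -> D0A (f 1).
Proof.
case=> n [u [d [v [Duv ->]]]].
exists n, (fun _ => 1), (fun i => u i \o d i), (fun i => v i 1).
split=> [i|]; first by have [Du D0d _] := Duv i; apply: D0_comp.
by apply: eq_bigr => i _; rewrite scale1r.
Qed.

Lemma DD0D_DIdeal : isDIdeal (@DD0D K A).
Proof.
split=> [|||u v Du Df]; [exact: DD0D_isD | exact: DD0D0 | |].
  move=> u v Du Dv; apply: DD0DD Du _.
  by apply: eqfun_pred (DD0D_compl (isD_mulop (-1)) Dv) => x; rewrite /= /mulop mulN1r.
by split; [apply: DD0D_compl | apply: DD0D_compr].
Qed.

Lemma DD0DP f : DD0D f <-> plusD0 (@D0A K A) f.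
Proof.
rewrite plusD0P; split=> [Df|[Df /(D0A_capA DD0D_DIdeal D0_DD0D) Df1]].
  by split; [apply: DD0D_isD | apply: DD0D_D0A].
by apply/(isDIdealP DD0D_DIdeal D0_DD0D).
Qed.

End DifferentialOperators.

Theorem proposition3p4 (K : fieldType) (A : comAlgType K) :
  (* (1) *)
  (forall M : A -> Prop, (@isDsubmodule K A) M <-> (@isDstableIdeal K A) M) /\
  (* (2) *)
  ((@Dsimple K A) <->
     ~ (exists a : A -> Prop, (@isDstableIdeal K A) a /\
          (exists x, a x /\ x != 0) /\ (exists y, ~ a y))) /\
  (* (3) bijection a |-> a + D_[0], inverse I |-> I \cap A *)
  (forall a : A -> Prop, (@isDstableIdeal K A) a -> (forall x, (@D0A K A) x -> a x) ->
     [/\ (@isDIdeal K A) ((@plusD0 K A) a), (forall d, (@D0 K A) d -> (@plusD0 K A) a d)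
       & forall x, (@capA K A) ((@plusD0 K A) a) x <-> a x]) /\
  (forall I : (A -> A) -> Prop, (@isDIdeal K A) I -> (forall d, (@D0 K A) d -> I d) ->
     [/\ (@isDstableIdeal K A) ((@capA K A) I), (forall x, (@D0A K A) x -> (@capA K A) I x)
       & forall f, (@plusD0 K A) ((@capA K A) I) f <-> I f]) /\
  (* D D_[0] D = D_[0]*A + D_[0], least ideal of D containing D_[0] *)
  (forall f : A -> A, (@DD0D K A) f <-> (@plusD0 K A) (@D0A K A) f) /\
  (@isDIdeal K A) (@DD0D K A) /\ (forall d, (@D0 K A) d -> (@DD0D K A) d) /\
  (forall I, (@isDIdeal K A) I -> (forall d, (@D0 K A) d -> I d) -> forall f, (@DD0D K A) f -> I f) /\
  (* D_[0]*A = A \cap D D_[0] D, and it is a D-stable ideal of A *)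
  (forall x : A, (@D0A K A) x <-> (@capA K A) (@DD0D K A) x) /\
  (@isDstableIdeal K A) (@D0A K A).
Proof.
split; first exact: isDsubmoduleP.
split; first exact: DsimpleP.
split.
  move=> a stable_a a_D0A.
  by split; [apply: plusD0_DIdeal | apply: D0_plusD0 | apply: capA_plusD0].
split.
  move=> I ideal_I I_D0; split; [exact: capA_stable | exact: D0A_capA |].
  by move=> f; rewrite plusD0P (isDIdealP ideal_I I_D0).
split; first exact: DD0DP.
split; first exact: DD0D_DIdeal.
split; first exact: D0_DD0D.
split; first exact: DD0D_min.
split; last exact: D0A_stable.
move=> x; split=> [|/DD0D_D0A]; last by rewrite /mulop mulr1.
by apply: D0A_capA; [apply: DD0D_DIdeal | apply: D0_DD0D].
Qed.
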